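(* Let $\alpha>1$ be fixed, and let $K$ and $J$ be bounded fundamental domains for the lattices $\alpha\mathbb{Z}$ and $\frac1\alpha\mathbb{Z}$ in $\mathbb{R}$, respectively. Then $B_\alpha:=\{\mathcal{Z}_{r,s,\alpha}: r\in J,\ s\in K\}$ is an algebraic basis (Hamel basis) of the complex vector space $V_\alpha:=\mathrm{span}_{\mathbb{C}}\{\mathcal{Z}_{r,s,\alpha}: r,s\in\mathbb{R}\}$ of all finite linear combinations of such measures.
   Context: For $r,s\in\mathbb{R}$ and $\alpha>0$, $\mathcal{Z}_{r,s,\alpha}:=\chi_r\cdot(\delta_s*\delta_{\alpha\mathbb{Z}})=\sum_{m\in\mathbb{Z}}e^{2\pi i r(s+m\alpha)}\delta_{s+m\alpha}$, where $\chi_r(x)=e^{2\pi i rx}$ and $\delta_x$ is the unit point mass at $x$. A fundamental domain for a lattice $L\subset\mathbb{R}$ is a set containing exactly one point of each coset $x+L$. *)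

From Stdlib Require Import Reals List ZArith ClassicalEpsilon.
From Coquelicot Require Import Coquelicot.
Open Scope R_scope.

Definition chi (r x : R) : C := (cos (2 * PI * r * x), sin (2 * PI * r * x)).

Definition in_coset (alpha s x : R) : Prop := exists m : Z, x = s + IZR m * alpha.

(* The purely atomic measure Z_{r,s,alpha} = sum_m e^{2 pi i r (s + m alpha)} delta_{s+m alpha},
   represented by its atom-weight function x |-> Z_{r,s,alpha}({x}). *)
Definition Zm (r s alpha : R) : R -> C :=
  fun x => if excluded_middle_informative (in_coset alpha s x) then chi r x else (0 : C).

Definition lincomb (l : list (C * (R -> C))) : R -> C :=
  fun x => fold_right (fun p acc => Cplus (Cmult (fst p) (snd p x)) acc) (0 : C) l.

Definition fundamental_domain (step : R) (K : R -> Prop) : Prop :=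
  forall x : R, exists k : R, (K k /\ in_coset step k x) /\
    forall k' : R, K k' /\ in_coset step k' x -> k' = k.

Definition bounded_set (K : R -> Prop) : Prop := exists M : R, forall k, K k -> Rabs k <= M.

Definition V_alpha (alpha : R) (f : R -> C) : Prop :=
  exists l : list (C * (R -> C)),
    List.Forall (fun p : C * (R -> C) => exists r s : R, snd p = Zm r s alpha) l /\ f = lincomb l.

Definition B_alpha (alpha : R) (J K : R -> Prop) (f : R -> C) : Prop :=
  exists r s : R, J r /\ K s /\ f = Zm r s alpha.

Definition hamel_basis (V B : (R -> C) -> Prop) : Prop :=
  (forall b, B b -> V b) /\
  (forall l : list (C * (R -> C)),
      List.Forall (fun p : C * (R -> C) => B (snd p)) l -> NoDup (map snd l) ->
      lincomb l = (fun _ => (0 : C)) -> List.Forall (fun p : C * (R -> C) => fst p = (0 : C)) l) /\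
  (forall f, V f -> exists l : list (C * (R -> C)),
      List.Forall (fun p : C * (R -> C) => B (snd p)) l /\ f = lincomb l).

(* On a coset s + alpha Z, the measure Z_{r,s,alpha} is a geometric sequence with ratio
   e^{2 pi i r alpha}; for r in J these ratios are pairwise distinct, and for distinct s in K
   the cosets are disjoint.  Hence the difference operator f |-> f(. + alpha) - e^{2 pi i r alpha} f
   on s + alpha Z (identity elsewhere) kills Z_{r,s,alpha} and rescales every other element of
   B_alpha by a nonzero factor, which yields linear independence by induction on the length of a
   vanishing combination.  Spanning holds because moving r by a multiple of 1/alpha and s by a
   multiple of alpha only multiplies Z_{r,s,alpha} by a nonzero constant. *)
From Stdlib Require Import Reals Lra List ZArith ClassicalEpsilon FunctionalExtensionality.
From Coquelicot Require Import Coquelicot.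
Open Scope R_scope.

Lemma cos_eq_1 x : cos x = 1 -> exists k : Z, x = 2 * IZR k * PI.
Proof.
  intro Hx.
  assert (Hs : sin (x / 2) = 0).
  { replace x with (2 * (x / 2)) in Hx by field.
    rewrite cos_2a_sin in Hx.
    assert (Hsq : sin (x / 2) * sin (x / 2) = 0) by lra.
    destruct (Rmult_integral _ _ Hsq); assumption. }
  destruct (sin_eq_0_0 _ Hs) as [k Hk].
  exists k. lra.
Qed.

Lemma chi_addx r x y : chi r (x + y) = (chi r x * chi r y)%C.
Proof.
  unfold chi, Cmult; simpl.
  replace (2 * PI * r * (x + y)) with (2 * PI * r * x + 2 * PI * r * y) by ring.
  rewrite cos_plus, sin_plus. f_equal; ring.
Qed.

Lemma chi_addr r r' x : chi (r + r') x = (chi r x * chi r' x)%C.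
Proof.
  unfold chi, Cmult; simpl.
  replace (2 * PI * (r + r') * x) with (2 * PI * r * x + 2 * PI * r' * x) by ring.
  rewrite cos_plus, sin_plus. f_equal; ring.
Qed.

Lemma chi_neq0 r x : chi r x <> 0.
Proof.
  unfold chi. intro H0. injection H0 as Hc Hs.
  exact (cos_sin_0 _ (conj Hc Hs)).
Qed.

Lemma chi_eq1 r x : chi r x = 1 <-> exists n : Z, r * x = IZR n.
Proof.
  unfold chi, RtoC. split.
  - intro H1. injection H1 as Hc _.
    destruct (cos_eq_1 _ Hc) as [k Hk].
    exists k. pose proof PI_RGT_0.
    apply Rmult_eq_reg_l with (2 * PI); [|lra].
    replace (2 * PI * (r * x)) with (2 * PI * r * x) by ring.
    rewrite Hk. ring.
  - intros [n Hn].
    replace (2 * PI * r * x) with (2 * (IZR n * PI)) by (rewrite <- Hn; ring).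
    rewrite cos_2a_sin, sin_2a, sin_eq_0_1 by (exists n; reflexivity).
    f_equal; ring.
Qed.

Lemma in_coset_refl a s : in_coset a s s.
Proof. exists 0%Z. simpl. ring. Qed.

Lemma in_coset_shift a s x : in_coset a s x -> in_coset a s (x + a).
Proof. intros [m Hm]. exists (m + 1)%Z. rewrite plus_IZR, Hm. ring. Qed.

Lemma in_coset_common a s s' x : in_coset a s x -> in_coset a s' x -> in_coset a s s'.
Proof. intros [m Hm] [m' Hm']. exists (m - m')%Z. rewrite minus_IZR. lra. Qed.

Lemma in_coset_rebase a s s' x : in_coset a s' s -> (in_coset a s x <-> in_coset a s' x).
Proof.
  intros [m Hm]. split.
  - intros [j Hj]. exists (m + j)%Z. rewrite plus_IZR. lra.
  - intros [j Hj]. exists (j - m)%Z. rewrite minus_IZR. lra.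
Qed.

Lemma fundamental_domain_unique a K s s' :
  fundamental_domain a K -> K s -> K s' -> in_coset a s s' -> s = s'.
Proof.
  intros HK Ks Ks' Hss'. destruct (HK s') as [k [_ Hk]].
  rewrite (Hk s' (conj Ks' (in_coset_refl a s'))), (Hk s (conj Ks Hss')).
  reflexivity.
Qed.

Lemma fundamental_domain_chi_inj a J r r' :
  a <> 0 -> fundamental_domain (/ a) J -> J r -> J r' -> chi r a = chi r' a -> r = r'.
Proof.
  intros Ha HJ Jr Jr' Hchi.
  assert (Hone : chi (r' + - r) a = 1).
  { rewrite chi_addr, <- Hchi, <- chi_addr.
    apply chi_eq1. exists 0%Z. simpl. ring. }
  apply chi_eq1 in Hone. destruct Hone as [n Hn].
  apply (fundamental_domain_unique _ _ _ _ HJ Jr Jr').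
  exists n. rewrite <- Hn. field. exact Ha.
Qed.

Lemma Zm_at_base r s a : Zm r s a s = chi r s.
Proof.
  unfold Zm. destruct (excluded_middle_informative _) as [_|Hn]; [reflexivity|].
  exfalso. exact (Hn (in_coset_refl a s)).
Qed.

Lemma Zm_neq0 r s a : Zm r s a <> (fun _ => 0).
Proof.
  intro H0. apply (chi_neq0 r s). rewrite <- (Zm_at_base r s a), H0. reflexivity.
Qed.

Lemma Zm_rebase r s s' a : in_coset a s' s -> Zm r s a = Zm r s' a.
Proof.
  intro Hs. apply functional_extensionality; intro x. unfold Zm.
  pose proof (in_coset_rebase a s s' x Hs) as Hiff.
  destruct (excluded_middle_informative (in_coset a s x));
  destruct (excluded_middle_informative (in_coset a s' x)); tauto.
Qed.

(* The character at n/a is constant on s + aZ, with value its value at s. *)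
Lemma Zm_shift_frequency r s a (n : Z) :
  a <> 0 -> Zm (r + IZR n / a) s a = fun x => (chi (IZR n / a) s * Zm r s a x)%C.
Proof.
  intro Ha. apply functional_extensionality; intro x. unfold Zm.
  destruct (excluded_middle_informative (in_coset a s x)) as [[m Hm]|]; [|ring].
  assert (Hper : chi (IZR n / a) (IZR m * a) = 1).
  { apply chi_eq1. exists (n * m)%Z. rewrite mult_IZR. field. exact Ha. }
  rewrite chi_addr, Hm, (chi_addx (IZR n / a)), Hper. ring.
Qed.

Lemma Zm_reduce a J K r s :
  a <> 0 -> fundamental_domain a K -> fundamental_domain (/ a) J ->
  exists r' s' (c : C), J r' /\ K s' /\ Zm r s a = fun x => (c * Zm r' s' a x)%C.
Proof.
  intros Ha HK HJ.
  destruct (HK s) as [s' [[Ks' Hs] _]].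
  destruct (HJ r) as [r' [[Jr' [n Hn]] _]].
  exists r', s', (chi (IZR n / a) s'). repeat split; try assumption.
  rewrite (Zm_rebase r s s' a Hs), Hn.
  change (r' + IZR n * / a) with (r' + IZR n / a).
  apply Zm_shift_frequency. exact Ha.
Qed.

Definition linear_op (T : (R -> C) -> R -> C) : Prop :=
  forall (c : C) (f g : R -> C),
    T (fun x => c * f x + g x)%C = fun x => (c * T f x + T g x)%C.

Lemma linear_op_zero T : linear_op T -> T (fun _ => 0) = fun _ => 0.
Proof.
  intro HT.
  pose proof (HT (RtoC (-1)) (fun _ => 0) (fun _ => 0)) as H0. cbv beta in H0.
  rewrite (functional_extensionality (fun _ : R => RtoC (-1) * 0 + 0)%C (fun _ => 0))
    in H0 by (intro; ring).
  apply functional_extensionality; intro x.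
  rewrite (equal_f H0 x). ring.
Qed.

Lemma lincomb_cons p l :
  lincomb (p :: l) = fun x => (fst p * snd p x + lincomb l x)%C.
Proof. reflexivity. Qed.

Lemma lincomb_coef0 l :
  List.Forall (fun p : C * (R -> C) => fst p = 0) l -> lincomb l = fun _ => 0.
Proof.
  induction 1 as [|p l Hp _ IH]; [reflexivity|].
  rewrite lincomb_cons, IH, Hp. apply functional_extensionality; intro; ring.
Qed.

Lemma lincomb_eigenvectors T l :
  linear_op T ->
  List.Forall (fun p : C * (R -> C) =>
    exists mu : C, mu <> 0 /\ T (snd p) = fun x => (mu * snd p x)%C) l ->
  exists l', map snd l' = map snd l /\ T (lincomb l) = lincomb l' /\
    (List.Forall (fun p : C * (R -> C) => fst p = 0) l' ->
     List.Forall (fun p : C * (R -> C) => fst p = 0) l).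
Proof.
  intros HT. induction 1 as [|[c b] l [mu [Hmu Hb]] _ IH].
  - exists nil. repeat split; [apply linear_op_zero; exact HT|constructor].
  - destruct IH as (l' & Hsnd & HTl & Hcoef).
    exists (((c * mu)%C, b) :: l'). repeat split.
    + simpl. rewrite Hsnd. reflexivity.
    + rewrite !lincomb_cons. simpl in Hb |- *. rewrite HT, Hb, HTl.
      apply functional_extensionality; intro; ring.
    + intro H0. inversion H0 as [|? ? Hcmu Hl']; subst. constructor.
      * simpl in Hcmu |- *.
        replace c with (c * mu / mu)%C by (field; exact Hmu).
        rewrite Hcmu. field. exact Hmu.
      * exact (Hcoef Hl').
Qed.

Lemma lincomb_independent (P : (R -> C) -> Prop) :
  (forall b, P b -> b <> fun _ => 0) ->
  (forall b, P b -> exists T, linear_op T /\ T b = (fun _ => 0) /\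
     forall b', P b' -> b' <> b ->
       exists mu : C, mu <> 0 /\ T b' = fun x => (mu * b' x)%C) ->
  forall l : list (C * (R -> C)),
    List.Forall (fun p => P (snd p)) l -> NoDup (map snd l) ->
    lincomb l = (fun _ => 0) -> List.Forall (fun p : C * (R -> C) => fst p = 0) l.
Proof.
  intros Hnz Hsep l. remember (map snd l) as bs eqn:Hbs. revert l Hbs.
  induction bs as [|b bs IH]; intros [|[c b0] l] Hbs HP Hnd H0;
    try discriminate; [constructor|].
  injection Hbs as <- Hbs.
  inversion HP as [|? ? Pb HPl]; subst. inversion Hnd as [|? ? Hb Hndl]; subst.
  destruct (Hsep b Pb) as (T & HT & Tb & Heig).
  assert (Heigl : List.Forall (fun p : C * (R -> C) =>
    exists mu : C, mu <> 0 /\ T (snd p) = fun x => (mu * snd p x)%C) l).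
  { apply List.Forall_forall. intros p Hp. apply Heig.
    - exact (proj1 (List.Forall_forall _ l) HPl p Hp).
    - intro Hpb. apply Hb. rewrite <- Hpb. apply in_map. exact Hp. }
  destruct (lincomb_eigenvectors T l HT Heigl) as (l' & Hsnd & HTl & Hcoef).
  assert (Hl'0 : lincomb l' = fun _ => 0).
  { rewrite <- HTl. apply functional_extensionality; intro x.
    pose proof (equal_f (f_equal T H0) x) as Hx.
    rewrite lincomb_cons in Hx. cbn [fst snd] in Hx.
    rewrite HT, Tb, linear_op_zero in Hx by exact HT.
    rewrite <- Hx. ring. }
  assert (Hl0 : List.Forall (fun p : C * (R -> C) => fst p = 0) l).
  { apply Hcoef, (IH l').
    - congruence.
    - apply List.Forall_map. rewrite Hsnd. apply List.Forall_map. exact HPl.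
    - exact Hndl.
    - exact Hl'0. }
  constructor; [simpl|exact Hl0].
  destruct (classic (c = 0)) as [|Hc]; [assumption|exfalso].
  apply (Hnz b Pb). apply functional_extensionality; intro x.
  pose proof (equal_f H0 x) as Hx.
  rewrite lincomb_cons, (lincomb_coef0 l Hl0) in Hx. simpl in Hx.
  replace (b x) with (/ c * (c * b x + 0))%C by (field; exact Hc).
  rewrite Hx. ring.
Qed.

Definition coset_difference (a s : R) (lam : C) (f : R -> C) : R -> C :=
  fun x => if excluded_middle_informative (in_coset a s x)
           then (f (x + a)%R - lam * f x)%C else f x.

Lemma coset_difference_linear a s lam : linear_op (coset_difference a s lam).
Proof.
  intros c f g. apply functional_extensionality; intro x. unfold coset_difference.
  destruct (excluded_middle_informative _); ring.
Qed.

Lemma coset_difference_Zm_same a s lam r :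
  coset_difference a s lam (Zm r s a) = fun x => ((chi r a - lam) * Zm r s a x)%C.
Proof.
  apply functional_extensionality; intro x. unfold coset_difference, Zm.
  destruct (excluded_middle_informative (in_coset a s x)) as [Hx|];
    [|ring].
  destruct (excluded_middle_informative (in_coset a s (x + a))) as [|Hn].
  - rewrite chi_addx. ring.
  - exfalso. exact (Hn (in_coset_shift a s x Hx)).
Qed.

Lemma coset_difference_Zm_other a s s' lam r :
  ~ in_coset a s s' -> coset_difference a s lam (Zm r s' a) = Zm r s' a.
Proof.
  intro Hss'. apply functional_extensionality; intro x. unfold coset_difference, Zm.
  destruct (excluded_middle_informative (in_coset a s x)) as [Hx|]; [|reflexivity].
  destruct (excluded_middle_informative (in_coset a s' x)) as [Hx'|].
  { exfalso. exact (Hss' (in_coset_common a s s' x Hx Hx')). }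
  destruct (excluded_middle_informative (in_coset a s' (x + a))) as [Hx'|].
  { exfalso. exact (Hss' (in_coset_common a s s' _ (in_coset_shift a s x Hx) Hx')). }
  ring.
Qed.

Section Basis.

Variables (alpha : R) (J K : R -> Prop).
Hypothesis alpha_neq0 : alpha <> 0.
Hypothesis fdK : fundamental_domain alpha K.
Hypothesis fdJ : fundamental_domain (/ alpha) J.

Lemma B_alpha_separated b : B_alpha alpha J K b ->
  exists T, linear_op T /\ T b = (fun _ => 0) /\
    forall b', B_alpha alpha J K b' -> b' <> b ->
      exists mu : C, mu <> 0 /\ T b' = fun x => (mu * b' x)%C.
Proof.
  intros (r & s & Jr & Ks & ->).
  exists (coset_difference alpha s (chi r alpha)).
  split; [apply coset_difference_linear|split].
  - rewrite coset_difference_Zm_same.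
    apply functional_extensionality; intro; ring.
  - intros b' (r' & s' & Jr' & Ks' & ->) Hne.
    destruct (classic (in_coset alpha s s')) as [Hss'|Hss'].
    + destruct (fundamental_domain_unique _ _ _ _ fdK Ks Ks' Hss').
      exists (chi r' alpha - chi r alpha)%C. split.
      * intro Hmu. apply Hne. f_equal.
        apply (fundamental_domain_chi_inj alpha J); try assumption.
        replace (chi r' alpha) with (chi r' alpha - chi r alpha + chi r alpha)%C by ring.
        rewrite Hmu. ring.
      * apply coset_difference_Zm_same.
    + exists (RtoC 1). split.
      * intro H1. injection H1. lra.
      * rewrite coset_difference_Zm_other by exact Hss'.
        apply functional_extensionality; intro; ring.
Qed.

Lemma V_alpha_spanned f : V_alpha alpha f ->
  exists l, List.Forall (fun p : C * (R -> C) => B_alpha alpha J K (snd p)) l /\ f = lincomb l.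
Proof.
  intros [l [Hl ->]].
  induction Hl as [|[c g] l [r [s Hg]] _ [l' [Hl' Hlin]]].
  - exists nil. split; [constructor|reflexivity].
  - simpl in Hg. subst g.
    destruct (Zm_reduce alpha J K r s alpha_neq0 fdK fdJ) as (r' & s' & c' & Jr' & Ks' & Hrs).
    exists (((c * c')%C, Zm r' s' alpha) :: l'). split.
    + constructor; [exists r', s'; auto|exact Hl'].
    + rewrite !lincomb_cons, Hlin, Hrs. simpl.
      apply functional_extensionality; intro; ring.
Qed.

End Basis.

Theorem proposition3p6 (alpha : R) (J K : R -> Prop) :
  1 < alpha ->
  fundamental_domain alpha K -> bounded_set K ->
  fundamental_domain (/ alpha) J -> bounded_set J ->
  hamel_basis (V_alpha alpha) (B_alpha alpha J K).
Proof.
  intros Halpha fdK _ fdJ _.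
  assert (alpha_neq0 : alpha <> 0) by lra.
  split; [|split].
  - intros b (r & s & Jr & Ks & ->).
    exists ((RtoC 1, Zm r s alpha) :: nil). split.
    + constructor; [exists r, s; reflexivity|constructor].
    + apply functional_extensionality; intro x. unfold lincomb. simpl. ring.
  - apply lincomb_independent.
    + intros b (r & s & _ & _ & ->). apply Zm_neq0.
    + apply B_alpha_separated; assumption.
  - apply V_alpha_spanned; assumption.
Qed.
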